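(* Let $W=(V,B)$ be a non-degenerate formed space of Witt index $\omega\ge2$ as in the context, and let $1<k<\omega$. Then the polar Grassmann graph on singular $k$-subspaces of $W$ is not distance-regular.
   Context: $V$ is a finite-dimensional vector space over $\mathbb{F}_q$ and $W=(V,B)$ is one of: a symplectic space of dimension $2\omega$; an orthogonal space of dimension $2\omega+1$, of plus type of dimension $2\omega$, or of minus type of dimension $2\omega+2$; a unitary space of dimension $2\omega+1$ or $2\omega$ ($q$ a square). A subspace is singular if it is totally isotropic (totally singular in the orthogonal case); maximal singular subspaces have dimension $\omega$. For $k<\omega$ the polar Grassmann graph has as vertices the singular $k$-subspaces, two distinct vertices $u,v$ adjacent iff $u+v$ is a singular $(k+1)$-subspace. A connected graph is distance-regular if there are integers $b_i,c_i$ such that for any two vertices $X,Y$ at distance $i$, exactly $c_i$ neighbours of $X$ are at distance $i-1$ from $Y$ and exactly $b_i$ at distance $i+1$ from $Y$. *)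

From HB Require Import structures.
From mathcomp Require Import all_boot all_algebra.
Import VectorInternalTheory.

Set Implicit Arguments.
Unset Strict Implicit.
Unset Printing Implicit Defensive.
Import GRing.Theory.

HB.instance Definition _ (F : finFieldType) (n : nat) :=
  [Finite of {vspace 'rV[F]_n} by <:].

Section Graph.
Variables (T : finType) (vert : {pred T}) (adj : rel T).

Definition gadj : rel T := fun x y => [&& vert x, vert y & adj x y].

Fixpoint ball (i : nat) (x : T) : {pred T} :=
  if i is j.+1 then
    [pred y | (y \in ball j x) || [exists z, (z \in ball j x) && gadj z y]]
  else [pred y | y == x].

Definition dist_is (i : nat) (x y : T) : bool :=
  (y \in ball i x) && (if i is j.+1 then y \notin ball j x else true).

Definition gconnected : Prop :=
  forall x y, vert x -> vert y -> exists i, y \in ball i x.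

Definition distance_regular : Prop :=
  gconnected /\
  exists b c : nat -> nat, forall (i : nat) (x y : T), vert x -> vert y ->
    dist_is i x y ->
    (0 < i -> #|[pred z | gadj x z && dist_is i.-1 z y]| = c i) /\
    #|[pred z | gadj x z && dist_is i.+1 z y]| = b i.
End Graph.

Local Open Scope ring_scope.

Section Forms.
Variables (F : finFieldType) (n : nat).

Definition bil (M : 'M[F]_n) (x y : 'rV[F]_n) : F := (x *m M *m y^T) 0 0.
Definition sesq (s : {rmorphism F -> F}) (M : 'M[F]_n) (x y : 'rV[F]_n) : F :=
  (x *m M *m (map_mx s y)^T) 0 0.
(* quadratic form Q(x) = x A x^T (every quadratic form on F^n has this shape) *)
Definition quad (A : 'M[F]_n) (x : 'rV[F]_n) : F := (x *m A *m x^T) 0 0.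
Definition polarq (A : 'M[F]_n) (x y : 'rV[F]_n) : F :=
  quad A (x + y) - quad A x - quad A y.
End Forms.

Inductive formed_space (F : finFieldType) (n : nat) : Type :=
| Symplectic of 'M[F]_n
| Orthogonal of 'M[F]_n
| Unitary of {rmorphism F -> F} & 'M[F]_n.

Definition formed_space_ok (F : finFieldType) (n : nat) (W : formed_space F n)
  : Prop :=
  match W with
  | Symplectic M =>
      (forall x, bil M x x = 0) /\
      (forall x, (forall y, bil M x y = 0) -> x = 0)
  | Orthogonal A =>
      forall x, quad A x = 0 -> (forall y, polarq A x y = 0) -> x = 0
  | Unitary s M =>
      (forall x, s (s x) = x) /\ (exists x, s x != x) /\
      (forall x y, sesq s M y x = s (sesq s M x y)) /\
      (forall x, (forall y, sesq s M x y = 0) -> x = 0)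
  end.

Definition singular (F : finFieldType) (n : nat) (W : formed_space F n)
  (U : {vspace 'rV[F]_n}) : bool :=
  match W with
  | Symplectic M =>
      [forall u : 'rV[F]_n, forall v : 'rV[F]_n,
         (u \in U) && (v \in U) ==> (bil M u v == 0)]
  | Orthogonal A =>
      [forall u : 'rV[F]_n, (u \in U) ==> (quad A u == 0)]
  | Unitary s M =>
      [forall u : 'rV[F]_n, forall v : 'rV[F]_n,
         (u \in U) && (v \in U) ==> (sesq s M u v == 0)]
  end.

Definition witt_index (F : finFieldType) (n : nat) (W : formed_space F n)
  (w : nat) : Prop :=
  (exists U, singular W U /\ \dim U = w) /\
  (forall U, singular W U -> (\dim U <= w)%N).

Definition pg_vert (F : finFieldType) (n : nat) (W : formed_space F n)
  (k : nat) : {pred {vspace 'rV[F]_n}} :=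
  [pred U | (\dim U == k) && singular W U].

Definition pg_adj (F : finFieldType) (n : nat) (W : formed_space F n)
  (k : nat) : rel {vspace 'rV[F]_n} :=
  fun U V => [&& U != V, \dim (U + V)%VS == k.+1 & singular W (U + V)%VS].

(* Distance-regularity fails already at c_2, the number of common neighbours
   of two vertices at distance 2. Inside a singular subspace E + <q, p, r> of
   dimension k + 1 pick singular vectors p', r' ([yp], [yr] below; part of a
   dual basis, which exists by non-degeneracy) with B(p, p') <> 0 <> B(r, r')
   and orthogonal to the rest.
   For X = E + <q, p> and Y = E + <r, p'>, meeting in codimension 2, a common
   neighbour Z lies in X + Y by a dimension count and is orthogonal to p and p'
   (Z + X and Z + Y are singular); as <p, p'> is a hyperbolic pair, Z is forced
   to be E + <q, r>, so c_2 = 1. For X and Y' = E + <q, p'> both E + <q, r> and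
   E + <q, v> are common neighbours, where v = r' + t p is made orthogonal to
   p'; so c_2 >= 2. *)

From HB Require Import structures.
From mathcomp Require Import all_boot all_algebra.
From mathcomp Require Import zify ring.

Set Implicit Arguments.
Unset Strict Implicit.
Unset Printing Implicit Defensive.
Import GRing.Theory.
Local Open Scope ring_scope.

Section Sesquilinear.
Variables (F : finFieldType) (n : nat) (sigma : {rmorphism F -> F}) (G : 'M[F]_n).
Local Notation V := 'rV[F]_n.
Local Notation B := (sesq sigma G).

Lemma sesqDl x y z : B (x + y) z = B x z + B y z.
Proof. by rewrite /sesq !mulmxDl mxE. Qed.

Lemma sesqZl a x z : B (a *: x) z = a * B x z.
Proof. by rewrite /sesq -!scalemxAl mxE. Qed.

Lemma sesqDr x y z : B x (y + z) = B x y + B x z.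
Proof. by rewrite /sesq map_mxD linearD /= mulmxDr mxE. Qed.

Lemma sesqZr a x z : B x (a *: z) = sigma a * B x z.
Proof. by rewrite /sesq map_mxZ linearZ /= -scalemxAr mxE. Qed.

Lemma sesq0l z : B 0 z = 0.
Proof. by rewrite /sesq !mul0mx mxE. Qed.

Definition perp (w : V) : {vspace V} :=
  lker (linfun (mulmxr (G *m (map_mx sigma w)^T))).

Lemma mem_perp x w : (x \in perp w) = (B x w == 0).
Proof.
rewrite memv_ker lfunE /= /sesq mulmxA.
apply/eqP/eqP => [-> | B0]; first by rewrite mxE.
by apply/matrixP => i j; rewrite !ord1 B0 mxE.
Qed.

Lemma notin_perp (S : {vspace V}) x w :
  (S <= perp w)%VS -> x \notin perp w -> x \notin S.
Proof. by move/subvP=> Sw; apply: contra => /Sw. Qed.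
End Sesquilinear.

Section SubspaceSums.
Variables (K : fieldType) (vT : vectType K).
Implicit Types (S X Y Z : {vspace vT}) (x : vT).

Lemma dimv_add_line S x : x \notin S -> \dim (S + <[x]>) = (\dim S).+1.
Proof.
move=> xS; have x0 : x != 0 by apply: contraNneq xS => ->; rewrite mem0v.
suff capS0 : (S :&: <[x]> = 0)%VS.
  by have := dimv_sum_cap S <[x]>; rewrite capS0 dimv0 dim_vline x0 addn0 addn1.
apply/eqP; rewrite -subv0; apply/subvP => z /memv_capP [zS /vlineP [a za]].
rewrite memv0 za; have [-> | a0] := eqVneq a 0; first by rewrite scale0r.
by move: zS => /(memvZ a^-1); rewrite za scalerA mulVf // scale1r (negbTE xS).
Qed.

Lemma subv_add_of_adjacent X Y Z k :
  \dim X = k -> \dim Y = k -> \dim Z = k ->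
  \dim (X + Z) = k.+1 -> \dim (Z + Y) = k.+1 -> (k.+2 <= \dim (X + Y))%N ->
  (Z <= X + Y)%VS.
Proof.
move=> dX dY dZ dXZ dZY dXY.
have capXZY : (\dim (X :&: Z :&: (Z :&: Y)) <= \dim (X :&: Y))%N.
  by apply/dimvS/capvS; [exact: capvSl | exact: capvSr].
have /dimv_leqif_sup sumZ : (X :&: Z + Z :&: Y <= Z)%VS.
  by rewrite subv_add capvSr capvSl.
have sumXY : (X :&: Z + Z :&: Y <= X + Y)%VS.
  by apply: addvS; [exact: capvSl | exact: capvSr].
suff /eqP : \dim (X :&: Z + Z :&: Y) = \dim Z.
  by rewrite sumZ.2 => /subv_trans; apply.
have := dimv_sum_cap X Y; have := dimv_sum_cap X Z; have := dimv_sum_cap Z Y.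
have := dimv_sum_cap (X :&: Z) (Z :&: Y); have := sumZ.1; lia.
Qed.
End SubspaceSums.

Ltac subv_sum := first
  [ exact: subvv
  | apply: (subv_trans _ (addvSl _ _)); subv_sum
  | apply: (subv_trans _ (addvSr _ _)); subv_sum ].
Ltac subv_sums := rewrite ?subv_add; repeat (apply/andP; split); subv_sum.

Section GraphDistance.
Variables (T : finType) (vert : {pred T}) (adj : rel T).
Local Notation gadj := (gadj vert adj).
Local Notation dist_is := (dist_is vert adj).

Definition common_nbrs (x y : T) : {pred T} := [pred z | gadj x z && gadj z y].

Lemma ball1E x y : (y \in ball vert adj 1 x) = (y == x) || gadj x y.
Proof.
rewrite /= !inE; congr orb; apply/existsP/idP => [[z /andP [/eqP -> //]] | xy].
by exists x; rewrite inE eqxx.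
Qed.

Lemma dist2_not_gadj x y : dist_is 2 x y -> ~~ gadj x y.
Proof. by case/andP=> _; rewrite ball1E negb_or => /andP []. Qed.

Lemma dist2_common_nbr x y z :
  gadj x z -> gadj z y -> y != x -> ~~ gadj x y -> dist_is 2 x y.
Proof.
move=> xz zy yx nxy; rewrite /dist_is ball1E (negbTE yx) (negbTE nxy) andbT.
rewrite /= !inE; apply/orP; right; apply/existsP; exists z.
by rewrite ball1E xz orbT.
Qed.

Lemma card_c2_common_nbrs x y : dist_is 2 x y ->
  #|[pred z | gadj x z && dist_is 1 z y]| = #|common_nbrs x y|.
Proof.
move=> d2; apply: eq_card => z; rewrite !inE /dist_is ball1E /= inE.
case xz : (gadj x z) => //=; case: eqP => [yz | _]; last by rewrite andbT.
by move: (dist2_not_gadj d2); rewrite yz xz.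
Qed.

Lemma drg_card_common_nbrs x y x' y' : distance_regular vert adj ->
  vert x -> vert y -> vert x' -> vert y' -> dist_is 2 x y -> dist_is 2 x' y' ->
  #|common_nbrs x y| = #|common_nbrs x' y'|.
Proof.
move=> [_ [b [c drg]]] vx vy vx' vy' d2 d2'.
rewrite -(card_c2_common_nbrs d2) -(card_c2_common_nbrs d2').
by rewrite (drg 2 x y vx vy d2).1 // (drg 2 x' y' vx' vy' d2').1.
Qed.
End GraphDistance.

(** * Polar spaces *)

(* The three kinds of formed spaces are handled through a reflexive
   [sigma]-sesquilinear form with Gram matrix [G], a predicate [iso] of
   singular vectors (the zeros of the quadratic form in the orthogonal case,
   where the form is its polarisation) and the singular subspaces [sing]. *)
Record polar_axioms (F : finFieldType) (n : nat) (sigma : {rmorphism F -> F})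
    (G : 'M[F]_n) (iso : pred 'rV[F]_n) (sing : pred {vspace 'rV[F]_n}) : Prop :=
  PolarAxioms {
    sigmaK : involutive sigma;
    sesq_refl : forall x y, sesq sigma G x y = 0 -> sesq sigma G y x = 0;
    sesq_nondeg : forall x, iso x -> (forall y, sesq sigma G x y = 0) -> x = 0;
    iso_sesq : forall x, iso x -> sesq sigma G x x = 0;
    iso_addZ : forall x y a, iso x -> iso y -> sesq sigma G x y = 0 ->
      iso (x + a *: y);
    iso_adjust : forall x y, iso x -> sesq sigma G x y != 0 ->
      exists t, iso (y + t *: x);
    singularE : forall S : {vspace 'rV[F]_n}, sing S <->
      {in S, forall u, iso u} /\ {in S &, forall u v, sesq sigma G u v = 0}
  }.

Section PolarSpace.
Variables (F : finFieldType) (n : nat) (sigma : {rmorphism F -> F}).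
Variables (G : 'M[F]_n) (iso : pred 'rV[F]_n) (sing : pred {vspace 'rV[F]_n}).
Hypothesis ax : polar_axioms sigma G iso sing.
Local Notation V := 'rV[F]_n.
Local Notation B := (sesq sigma G).
Local Notation perp := (perp sigma G).

Lemma singularP (S : {vspace V}) :
  reflect ({in S, forall u, iso u} /\ {in S &, forall u v, B u v = 0}) (sing S).
Proof. by apply: (iffP idP) => /(singularE ax). Qed.

Lemma sesq_refl_neq x y : B x y != 0 -> B y x != 0.
Proof. by apply: contra => /eqP /(sesq_refl ax) ->. Qed.

Lemma sing_iso S x : sing S -> x \in S -> iso x.
Proof. by move=> /singularP [isoS _]; apply: isoS. Qed.

Lemma sing_sesq S x y : sing S -> x \in S -> y \in S -> B x y = 0.
Proof. by move=> /singularP [_ BS]; apply: BS. Qed.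

Lemma sing_perp S x : sing S -> x \in S -> (S <= perp x)%VS.
Proof. by move=> sS xS; apply/subvP => y yS; rewrite mem_perp (sing_sesq sS). Qed.

Lemma sing_subv S T : (S <= T)%VS -> sing T -> sing S.
Proof.
move=> /subvP ST sT; apply/singularP; split=> [u uS | u v uS vS].
  exact: sing_iso sT (ST u uS).
exact: sing_sesq sT (ST u uS) (ST v vS).
Qed.

Lemma sing_add_line S y : sing S -> iso y -> (S <= perp y)%VS ->
  sing (S + <[y]>)%VS.
Proof.
move=> sS iso_y /subvP Sy.
have Bsy s : s \in S -> B s y = 0 by move/Sy; rewrite mem_perp => /eqP.
apply/singularP; split=> [u | u v].
  move=> /memv_addP [s s_S [_ /vlineP [a ->] ->]].
  by apply: (iso_addZ ax) => //; [exact: sing_iso sS s_S | exact: Bsy].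
move=> /memv_addP [s s_S [_ /vlineP [a ->] ->]].
move=> /memv_addP [s' s'_S [_ /vlineP [a' ->] ->]].
rewrite !sesqDl !sesqDr !sesqZl !sesqZr (iso_sesq ax iso_y) (sing_sesq sS) //.
by rewrite Bsy // (sesq_refl ax (Bsy _ s'_S)) !mulr0 !addr0.
Qed.

Lemma sing_dual_vector (X : seq V) j :
  free X -> sing <<X>>%VS -> (j < size X)%N ->
  exists y, iso y /\ forall i, B X`_i y = (i == j)%:R.
Proof.
move=> frX sX jX.
(* The rows X_i G are free by non-degeneracy, so the values B(X_i, y) can be
   prescribed; adding a multiple of X_j then makes the solution singular. *)
have XiX i : X`_i \in <<X>>%VS.
  have [iX | Xi] := ltnP i (size X); first exact/memv_span/mem_nth.
  by rewrite nth_default ?mem0v.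
pose H : 'M[F]_(size X, n) := \matrix_(i < size X) (X`_i *m G).
have H_free : row_free H.
  apply: inj_row_free => v vH0.
  pose z := \sum_(i < size X) v 0 i *: X`_i.
  have zG : z *m G = v *m H.
    rewrite mulmx_suml mulmx_sum_row; apply: eq_bigr => i _.
    by rewrite rowK scalemxAl.
  have z0 : z = 0.
    apply: (sesq_nondeg ax).
      by apply: sing_iso sX _; apply: memv_suml => i _; apply/memvZ/XiX.
    by move=> y; rewrite /sesq zG vH0 !mul0mx mxE.
  have /(@freeP _ _ _ (in_tuple X)) freeX := frX; apply/rowP => i; rewrite mxE.
  exact: (freeX (fun i => v 0 i)).
pose e_j : 'rV[F]_(size X) := delta_mx 0 (Ordinal jX).
have /submxP [D HD] : (e_j <= H^T)%MS.
  by apply: submx_full; rewrite /row_full mxrank_tr.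
pose y0 := map_mx sigma D.
have By0 i : B X`_i y0 = (i == j)%:R.
  have [iX | Xi] := ltnP i (size X); last first.
    by rewrite nth_default // sesq0l gtn_eqF // (leq_trans jX).
  have -> : (i == j)%:R = (D *m H^T) 0 (Ordinal iX) by rewrite -HD mxE.
  rewrite /sesq (_ : map_mx sigma y0 = D); last first.
    by apply/matrixP => a b; rewrite !mxE (sigmaK ax).
  by rewrite !mxE; apply: eq_bigr => k _; rewrite !mxE mulrC.
have By0j : B X`_j y0 != 0 by rewrite By0 eqxx oner_eq0.
have [t iso_y] := iso_adjust ax (sing_iso sX (XiX j)) By0j.
exists (y0 + t *: X`_j); split=> // i.
by rewrite sesqDr sesqZr (sing_sesq sX (XiX i) (XiX j)) mulr0 addr0.
Qed.

Lemma memv_hyperbolic_perp S a b x :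
  (S <= perp a)%VS -> (S <= perp b)%VS -> iso a -> iso b -> B a b != 0 ->
  x \in (S + <[a]> + <[b]>)%VS -> x \in perp a -> x \in perp b -> x \in S.
Proof.
move=> /subvP Sa /subvP Sb iso_a iso_b ab.
move=> /memv_addP [_ /memv_addP [s sS [_ /vlineP [c ->] ->]]].
move=> [_ /vlineP [d ->] ->].
have Bsa : B s a = 0 by apply/eqP; rewrite -mem_perp Sa.
have Bsb : B s b = 0 by apply/eqP; rewrite -mem_perp Sb.
rewrite !mem_perp !sesqDl !sesqZl Bsa Bsb (iso_sesq ax iso_a) (iso_sesq ax iso_b).
rewrite !mulr0 !add0r !addr0 !mulf_eq0 (negbTE ab) (negbTE (sesq_refl_neq ab)).
by rewrite !orbF => /eqP -> /eqP ->; rewrite !scale0r !addr0.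
Qed.

(* [pg_vert] and [pg_adj] for an abstract [sing]; they unfold to those of the
   formed space when [sing] is [singular W]. *)
Local Notation pvert k := [pred S : {vspace V} | (\dim S == k) && sing S].
Local Notation padj k := (fun S T : {vspace V} =>
  [&& S != T, \dim (S + T)%VS == k.+1 & sing (S + T)%VS]).
Local Notation pgadj k := (gadj (pvert k) (padj k)).

Lemma pgadjP k S T :
  reflect [/\ \dim S = k, \dim T = k, S != T, \dim (S + T) = k.+1
            & sing (S + T)%VS]
          (pgadj k S T).
Proof.
apply: (iffP and3P) => [[/andP [/eqP -> _] /andP [/eqP -> _]] | ].
  by case/and3P=> -> /eqP -> ->.
move=> [dS dT ST dST sST]; rewrite /= dS dT dST ST sST !eqxx /=.
by rewrite (sing_subv (addvSl S T) sST) (sing_subv (addvSr S T) sST).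
Qed.

Lemma pgadj_add_lines S a c k : \dim S = k -> a \notin S ->
  c \notin (S + <[a]>)%VS -> sing (S + <[a]> + <[c]>)%VS ->
  pgadj k.+1 (S + <[a]>)%VS (S + <[c]>)%VS.
Proof.
move=> dS aS caS sSac.
have cS : c \notin S by apply: contra caS; apply/subvP/addvSl.
have Sa_Sc : (S + <[a]> + (S + <[c]>) = S + <[a]> + <[c]>)%VS.
  by apply/subv_anti/andP; split; subv_sums.
apply/pgadjP; split; rewrite ?Sa_Sc ?dimv_add_line ?dS //.
by apply: contraNneq caS => ->; apply/(subvP (addvSr _ _))/memv_line.
Qed.

Lemma pg_dist2 k X Y Z a b : pgadj k X Z -> pgadj k Z Y ->
  a \in X -> b \in Y -> B a b != 0 -> dist_is (pvert k) (padj k) 2 X Y.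
Proof.
move=> XZ ZY aX bY ab; apply: (dist2_common_nbr XZ ZY).
  apply: contraNneq ab => YX; have /pgadjP [_ _ _ _ sXZ] := XZ.
  by apply/eqP/(sing_sesq sXZ); apply/(subvP (addvSl _ _)); rewrite // -YX.
apply: contra ab => /pgadjP [_ _ _ _ sXY]; apply/eqP/(sing_sesq sXY).
  exact: subvP (addvSl _ _) _ aX.
exact: subvP (addvSr _ _) _ bY.
Qed.

(** * Two pairs of vertices at distance 2 with different c_2 *)

Section Frame.
Variables (E : {vspace V}) (p q r yp yr : V).
Hypothesis sing_frame : sing (E + <[q]> + <[p]> + <[r]>)%VS.
Hypothesis q_notin : q \notin (E + <[r]>)%VS.
Hypotheses (iso_yp : iso yp) (iso_yr : iso yr).
Hypothesis perp_yp : (E + <[q]> + <[r]> <= perp yp)%VS.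
Hypothesis perp_yr : (E + <[q]> + <[p]> <= perp yr)%VS.
Hypotheses (p_yp : B p yp != 0) (r_yr : B r yr != 0).

Local Notation k := (\dim E).+2.
Local Notation X := (E + <[q]> + <[p]>)%VS.
Local Notation Y := (E + <[r]> + <[yp]>)%VS.
Local Notation Y' := (E + <[q]> + <[yp]>)%VS.
Local Notation Z := (E + <[q]> + <[r]>)%VS.

Let frame_perp_p : (E + <[q]> + <[p]> + <[r]> <= perp p)%VS.
Proof. by apply: sing_perp sing_frame _; rewrite memvE; subv_sums. Qed.

Let frame_perp_r : (E + <[q]> + <[p]> + <[r]> <= perp r)%VS.
Proof. by apply: sing_perp sing_frame _; rewrite memvE; subv_sums. Qed.

Let iso_p : iso p.
Proof. by apply: sing_iso sing_frame _; rewrite memvE; subv_sums. Qed.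

Let p_notin_perp_yp : p \notin perp yp. Proof. by rewrite mem_perp. Qed.
Let r_notin_perp_yr : r \notin perp yr. Proof. by rewrite mem_perp. Qed.
Let yp_notin_perp_p : yp \notin perp p.
Proof. by rewrite mem_perp sesq_refl_neq. Qed.

Let dim_Eq : \dim (E + <[q]>) = (\dim E).+1.
Proof.
by rewrite dimv_add_line //; apply: contra q_notin; apply/subvP/addvSl.
Qed.

Let p_notin_Eq : p \notin (E + <[q]>)%VS.
Proof.
by apply: notin_perp p_notin_perp_yp; apply: subv_trans perp_yp; subv_sums.
Qed.

Let r_notin_Eq : r \notin (E + <[q]>)%VS.
Proof.
by apply: notin_perp r_notin_perp_yr; apply: subv_trans perp_yr; subv_sums.
Qed.

Let gadj_XZ : pgadj k X Z.
Proof. exact: pgadj_add_lines dim_Eq p_notin_Eq (notin_perp perp_yr _) _. Qed.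

Let yp_notin_Z : yp \notin Z.
Proof.
by apply: notin_perp yp_notin_perp_p; apply: subv_trans frame_perp_p; subv_sums.
Qed.

Let gadj_ZY : pgadj k Z Y.
Proof.
have -> : Z = (E + <[r]> + <[q]>)%VS by apply/subv_anti/andP; split; subv_sums.
apply: pgadj_add_lines q_notin _ _.
- rewrite dimv_add_line //; apply: notin_perp r_notin_perp_yr.
  by apply: subv_trans perp_yr; subv_sums.
- by apply: notin_perp yp_notin_perp_p; apply: subv_trans frame_perp_p; subv_sums.
apply: sing_add_line => //; last by apply: subv_trans perp_yp; subv_sums.
by apply: sing_subv sing_frame; subv_sums.
Qed.

Let gadj_ZY' : pgadj k Z Y'.
Proof.
apply: pgadj_add_lines dim_Eq r_notin_Eq yp_notin_Z _.
by apply: sing_add_line => //; apply: sing_subv sing_frame; subv_sums.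
Qed.

Let dim_X_add_r_yp : \dim (X + <[r]> + <[yp]>) = k.+2.
Proof.
rewrite (dimv_add_line (notin_perp frame_perp_p yp_notin_perp_p)).
rewrite (dimv_add_line (notin_perp perp_yr r_notin_perp_yr)).
by rewrite (dimv_add_line p_notin_Eq) dim_Eq.
Qed.

Lemma frame_common_nbr_XY W :
  W \in common_nbrs (pvert k) (padj k) X Y -> W = Z.
Proof.
move=> /andP [XW WY]; apply/eqP.
have [dX dW _ dXW sXW] := pgadjP _ _ _ XW.
have [_ dY _ dWY sWY] := pgadjP _ _ _ WY.
have [_ dZ _ _ _] := pgadjP _ _ _ gadj_XZ.
have W_XY : (W <= X + Y)%VS.
  apply: subv_add_of_adjacent dX dY dW dXW dWY _.
  by rewrite -dim_X_add_r_yp; apply: dimvS; subv_sums.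
have W_p : (W <= perp p)%VS.
  apply: subv_trans (sing_perp sXW _); first by subv_sums.
  by rewrite memvE; subv_sums.
have W_yp : (W <= perp yp)%VS.
  apply: subv_trans (sing_perp sWY _); first by subv_sums.
  by rewrite memvE; subv_sums.
suff WZ : (W <= Z)%VS by rewrite eqEdim WZ dZ dW leqnn.
have Z_p : (Z <= perp p)%VS by apply: subv_trans frame_perp_p; subv_sums.
apply/subvP => w wW; apply: (memv_hyperbolic_perp Z_p perp_yp) => //.
- by apply: (subvP _ _ (subvP W_XY _ wW)); subv_sums.
- exact: (subvP W_p).
- exact: (subvP W_yp).
Qed.

Lemma frame_extra_vector : exists v,
  [/\ iso v, (X <= perp v)%VS, v \in perp yp, v \in perp p & v \notin perp r].
Proof.
have p_yr : B p yr = 0.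
  by apply/eqP; rewrite -mem_perp (subvP perp_yr) // memvE; subv_sums.
have Bpp : B p p = 0 := iso_sesq ax iso_p.
have Bpr : B p r = 0.
  by apply/eqP; rewrite -mem_perp (subvP frame_perp_r) // memvE; subv_sums.
exists (yr + (- (B yr yp / B p yp)) *: p); split.
- exact (iso_addZ ax _ iso_yr iso_p (sesq_refl ax p_yr)).
- apply/subvP => x xX; have /(subvP perp_yr) := xX.
  rewrite !mem_perp sesqDr sesqZr => /eqP ->.
  have /(subvP frame_perp_p) : x \in (E + <[q]> + <[p]> + <[r]>)%VS.
    by apply: subvP xX; subv_sums.
  by rewrite mem_perp => /eqP ->; rewrite mulr0 addr0.
- by rewrite mem_perp sesqDl sesqZl mulNr divfK // subrr.
- by rewrite mem_perp sesqDl sesqZl Bpp mulr0 addr0 (sesq_refl ax p_yr).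
by rewrite mem_perp sesqDl sesqZl Bpr mulr0 addr0 sesq_refl_neq.
Qed.

Lemma frame_two_common_nbrs_XY' :
  (2 <= #|common_nbrs (pvert k) (padj k) X Y'|)%N.
Proof.
have [v [iso_v X_v v_yp v_p v_r]] := frame_extra_vector.
have X_r : (X <= perp r)%VS by apply: subv_trans frame_perp_r; subv_sums.
have Z_r : (Z <= perp r)%VS by apply: subv_trans frame_perp_r; subv_sums.
have v_notin_Eq : v \notin (E + <[q]>)%VS.
  by apply: notin_perp v_r; apply: subv_trans X_r; subv_sums.
have Eqv_yp : (E + <[q]> + <[v]> <= perp yp)%VS.
  by rewrite subv_add -memvE v_yp andbT; apply: subv_trans perp_yp; subv_sums.
have Eqv_p : (E + <[q]> + <[v]> <= perp p)%VS.
  by rewrite subv_add -memvE v_p andbT; apply: subv_trans frame_perp_p; subv_sums.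
have gadj_XZ' : pgadj k X (E + <[q]> + <[v]>)%VS.
  apply: pgadj_add_lines dim_Eq p_notin_Eq (notin_perp X_r v_r) _.
  by apply: sing_add_line => //; apply: sing_subv sing_frame; subv_sums.
have gadj_Z'Y' : pgadj k (E + <[q]> + <[v]>)%VS Y'.
  apply: pgadj_add_lines dim_Eq v_notin_Eq (notin_perp Eqv_p yp_notin_perp_p) _.
  apply: sing_add_line Eqv_yp => //; apply: sing_add_line => //.
    by apply: sing_subv sing_frame; subv_sums.
  by apply: subv_trans X_v; subv_sums.
have ZZ' : Z != (E + <[q]> + <[v]>)%VS.
  by apply: contraNneq (notin_perp Z_r v_r) => ->; rewrite memvE; subv_sums.
apply: (@leq_trans #|[set Z; (E + <[q]> + <[v]>)%VS]|).
  by rewrite cards2 ZZ'.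
apply/subset_leq_card/subsetP => W; rewrite !inE => /orP [] /eqP ->.
  by rewrite gadj_XZ gadj_ZY'.
by rewrite gadj_XZ' gadj_Z'Y'.
Qed.

Lemma frame_not_drg : ~ distance_regular (pvert k) (padj k).
Proof.
move=> drg.
have p_X : p \in X by rewrite memvE; subv_sums.
have yp_Y : yp \in Y by rewrite memvE; subv_sums.
have yp_Y' : yp \in Y' by rewrite memvE; subv_sums.
have [vX _ _] := and3P gadj_XZ; have [_ vY _] := and3P gadj_ZY.
have [_ vY' _] := and3P gadj_ZY'.
have XY_le1 : (#|common_nbrs (pvert k) (padj k) X Y| <= 1)%N.
  by apply/card_le1_eqP => W W' /frame_common_nbr_XY -> /frame_common_nbr_XY ->.
have dXY := pg_dist2 gadj_XZ gadj_ZY p_X yp_Y p_yp.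
have dXY' := pg_dist2 gadj_XZ gadj_ZY' p_X yp_Y' p_yp.
have := frame_two_common_nbrs_XY'.
by rewrite -(drg_card_common_nbrs drg vX vY vX vY' dXY dXY') leqNgt ltnS XY_le1.
Qed.
End Frame.

Lemma span_take_perp (X : seq V) y j m :
  (forall i, B X`_i y = (i == j)%:R) -> (m <= j)%N ->
  (<<take m X>> <= perp y)%VS.
Proof.
move=> BXy mj; apply/span_subvP => _ /(nthP 0) [i i_lt <-].
rewrite size_take_min ltn_min in i_lt; case/andP: i_lt => im _.
by rewrite nth_take // mem_perp BXy ltn_eqF // (leq_trans im).
Qed.

Theorem polar_grassmann_not_drg (U : {vspace V}) k :
  sing U -> (k < \dim U)%N -> (1 < k)%N -> ~ distance_regular (pvert k) (padj k).
Proof.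
move=> sU kU k_gt1; have [m km] : exists m, k = m.+2 by exists k.-2; lia.
have frb := basis_free (vbasisP U); set b := vbasis U in frb.
have sb : sing <<b>>%VS by rewrite (span_basis (vbasisP U)).
have sizeb : size b = \dim U := size_tuple _.
have mb : (m.+2 < size b)%N by rewrite sizeb -km.
have [yq [_ Byq]] := sing_dual_vector (j := m) frb sb (ltnW (ltnW mb)).
have [yp [iso_yp Byp]] := sing_dual_vector (j := m.+1) frb sb (ltnW mb).
have [yr [iso_yr Byr]] := sing_dual_vector (j := m.+2) frb sb mb.
have dimE : \dim <<take m b>> = m.
  have : free (take m b).
    by apply: (@catl_free _ _ (drop m b)); rewrite cat_take_drop.
  rewrite /free => /eqP ->; rewrite size_take_min.
  by apply/minn_idPl/ltnW/ltnW/ltnW.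
have b_U i : b`_i \in U.
  have [ib | bi] := ltnP i (size b); first exact/vbasis_mem/mem_nth.
  by rewrite nth_default ?mem0v.
have b_dual_neq0 i y : (forall j, B b`_j y = (j == i)%:R) -> B b`_i y != 0.
  by move->; rewrite eqxx oner_eq0.
have b_perp i j y :
    (forall l, B b`_l y = (l == j)%:R) -> i != j -> b`_i \in perp y.
  by move=> By ij; rewrite mem_perp By (negbTE ij).
rewrite km -dimE.
apply: (frame_not_drg (q := b`_m) (p := b`_m.+1) (r := b`_m.+2)
                      (yp := yp) (yr := yr)).
- apply: sing_subv sU; rewrite !subv_add -!memvE !b_U !andbT.
  by apply/span_subvP => x /mem_take /vbasis_mem.
- apply: (notin_perp (sigma := sigma) (G := G) (w := yq)).
    rewrite subv_add -memvE (b_perp _ _ _ Byq) ?(span_take_perp Byq) //.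
    lia.
  by rewrite mem_perp b_dual_neq0.
all: rewrite ?b_dual_neq0 // !subv_add -!memvE.
- by rewrite !(b_perp _ _ _ Byp) ?(span_take_perp Byp) //; lia.
by rewrite !(b_perp _ _ _ Byr) ?(span_take_perp Byr) //; lia.
Qed.
End PolarSpace.

(** * The three kinds of formed spaces *)

Section FormedSpaces.
Variables (F : finFieldType) (n : nat).
Local Notation V := 'rV[F]_n.
Implicit Types (x y : V) (S : {vspace V}).

Lemma forall_pairs_eq0P (f : V -> V -> F) S :
  reflect {in S &, forall u v, f u v = 0}
          [forall u, forall v, (u \in S) && (v \in S) ==> (f u v == 0)].
Proof.
apply: (iffP forallP) => [H u v uS vS | H u].
  by have /forallP /(_ v) := H u; rewrite uS vS => /eqP.
by apply/forallP => v; apply/implyP => /andP [uS vS]; rewrite H.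
Qed.

Lemma sesq_idfun (M : 'M[F]_n) x y : sesq idfun M x y = bil M x y.
Proof.
by congr (_ _ 0 0); congr (_ *m _^T); apply/matrixP => i j; rewrite mxE.
Qed.

Lemma symplectic_polar_axioms (M : 'M[F]_n) :
  formed_space_ok (Symplectic M) ->
  polar_axioms idfun M predT (singular (Symplectic M)).
Proof.
move=> [alt nd]; have alt' x : sesq idfun M x x = 0 by rewrite sesq_idfun alt.
split=> [// | x y Bxy | x _ Bx | x _ | // | x y _ _ | S].
- have := alt' (x + y).
  by rewrite !sesqDl !sesqDr !alt' Bxy add0r addr0 add0r.
- by apply: nd => y; rewrite -sesq_idfun.
- exact: alt'.
- by exists 0.
rewrite /singular; split=> [/forall_pairs_eq0P BS | [_ BS]].
  by split=> // u v uS vS; rewrite sesq_idfun BS.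
by apply/forall_pairs_eq0P => u v uS vS; rewrite -sesq_idfun BS.
Qed.

Lemma quad_sesq (A : 'M[F]_n) x : quad A x = sesq idfun A x x.
Proof. by rewrite sesq_idfun. Qed.

Lemma polarq_sesq (A : 'M[F]_n) x y :
  polarq A x y = sesq idfun A x y + sesq idfun A y x.
Proof. by rewrite /polarq !quad_sesq !sesqDl !sesqDr /=; ring. Qed.

Lemma polarqE (A : 'M[F]_n) x y : polarq A x y = sesq idfun (A + A^T) x y.
Proof.
rewrite polarq_sesq !sesq_idfun /bil mulmxDr mulmxDl [RHS]mxE; congr (_ + _).
by rewrite -[in LHS](trmxK (y *m A *m x^T)) mxE !trmx_mul trmxK mulmxA.
Qed.

Lemma polarqC (A : 'M[F]_n) x y : polarq A x y = polarq A y x.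
Proof. by rewrite !polarq_sesq addrC. Qed.

Lemma quad_addZ (A : 'M[F]_n) x y a :
  quad A (x + a *: y) = quad A x + a * polarq A x y + a * a * quad A y.
Proof.
by rewrite polarq_sesq !quad_sesq !sesqDl !sesqDr !sesqZl !sesqZr /=; ring.
Qed.

Lemma orthogonal_polar_axioms (A : 'M[F]_n) :
  formed_space_ok (Orthogonal A) ->
  polar_axioms idfun (A + A^T) [pred x | quad A x == 0]
    (singular (Orthogonal A)).
Proof.
move=> nd; split=> [// | x y | x /eqP Qx Bx | x /eqP Qx | x y a /eqP Qx /eqP Qy |
                    x y /eqP Qx | S]; rewrite -?polarqE.
- by rewrite polarqC.
- by apply: nd Qx _ => y; rewrite polarqE.
- by rewrite polarq_sesq -quad_sesq Qx addr0.
- by move=> Bxy; rewrite inE quad_addZ Qx Qy Bxy !mulr0 !addr0.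
- move=> Bxy; exists (- quad A y / polarq A y x).
  by rewrite inE quad_addZ Qx mulr0 addr0 !mulNr divfK ?subrr // polarqC.
rewrite /singular; split=> [/forall_inP QS | [isoS _]].
  split=> [u /QS // | u v uS vS]; rewrite -polarqE /polarq.
  by rewrite !(eqP (QS _ _)) ?subrr ?memvD.
by apply/forall_inP => u /isoS.
Qed.

Lemma involution_trace_onto (s : {rmorphism F -> F}) : involutive s ->
  (exists z, s z != z) -> forall h, s h = h -> exists u, u + s u = h.
Proof.
move=> sK [z sz] h sh; have d0 : z - s z != 0 by rewrite subr_eq0 eq_sym.
exists (h * z / (z - s z)).
rewrite rmorphM fmorphV rmorphM rmorphB sK sh.
by field; rewrite d0 -opprB oppr_eq0 d0.
Qed.

Lemma unitary_polar_axioms (s : {rmorphism F -> F}) (M : 'M[F]_n) :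
  formed_space_ok (Unitary s M) ->
  polar_axioms s M [pred x | sesq s M x x == 0] (singular (Unitary s M)).
Proof.
move=> [sK [s_nontriv [herm nd]]].
have refl x y : sesq s M x y = 0 -> sesq s M y x = 0.
  by move=> Bxy; rewrite herm Bxy rmorph0.
split=> [// | | x _ | x /eqP // | x y a /eqP Bxx /eqP Byy Bxy |
          x y /eqP Bxx Bxy | S].
- exact: refl.
- exact: nd.
- by rewrite inE !sesqDl !sesqDr !sesqZl !sesqZr Bxx Byy Bxy refl ?mulr0 ?addr0.
- have [u Hu] : exists u, u + s u = - sesq s M y y.
    by apply: involution_trace_onto; rewrite // rmorphN -herm.
  exists (u / sesq s M x y).
  rewrite inE !sesqDl !sesqDr !sesqZl !sesqZr Bxx !mulr0 addr0.
  rewrite [sesq s M y x]herm -rmorphM !divfK //.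
  by rewrite -addrA [s u + u]addrC Hu addrN.
rewrite /singular; split=> [/forall_pairs_eq0P BS | [_ BS]].
  by split=> [u uS | u v uS vS]; rewrite ?inE BS.
by apply/forall_pairs_eq0P.
Qed.
End FormedSpaces.

Theorem corollary4p4 (F : finFieldType) (n : nat) (W : formed_space F n)
    (w k : nat) :
  formed_space_ok W -> witt_index W w -> (2 <= w)%N -> (1 < k < w)%N ->
  ~ distance_regular (pg_vert W k) (pg_adj W k).
Proof.
move=> ok [[U [sU dimU]] _] _ /andP [k_gt1 k_lt_w].
have kU : (k < \dim U)%N by rewrite dimU.
case: W ok sU => [M | A | s M] ok sU; apply: polar_grassmann_not_drg sU kU k_gt1.
- exact: symplectic_polar_axioms.
- exact: orthogonal_polar_axioms.
- exact: unitary_polar_axioms.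
Qed.
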